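(* Let $\mathcal{G}=(G,\lambda)$ be a simple temporal clique with vertex set $V$, and let $u,v,w$ be three distinct vertices such that $\{u,v\}=e^-(v)$ and $\{u,w\}=e^+(w)$. Let $S'$ be a temporal spanner of the simple temporal clique $\mathcal{G}[V\setminus\{u\}]$ (the complete graph on $V\setminus\{u\}$ with the restriction of $\lambda$). Then $S=S'\cup\{\{u,v\},\{u,w\}\}$ is a temporal spanner of $\mathcal{G}$.
   Context: A simple temporal clique is a pair $\mathcal{G}=(G,\lambda)$ where $G=(V,E)$ is the complete graph on a finite vertex set $V$ and $\lambda:E\to\mathbb{N}$ assigns to each edge a single integer label such that any two distinct edges sharing an endpoint have different labels. A journey from $x$ to $y$ is a sequence of vertices $x=u_0,u_1,\dots,u_k=y$ ($k\ge1$) with $\lambda(\{u_{i-1},u_i\})<\lambda(\{u_i,u_{i+1}\})$ for all $1\le i<k$. A set $E'\subseteq E$ is a temporal spanner of $\mathcal{G}$ if for every ordered pair of distinct vertices $x,y$ there is a journey from $x$ to $y$ all of whose edges belong to $E'$. For a vertex $v$, $e^-(v)$ (resp. $e^+(v)$) denotes the edge incident to $v$ with the smallest (resp. largest) label. *)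

From mathcomp Require Import all_boot.
Set Implicit Arguments. Unset Strict Implicit. Unset Printing Implicit Defensive.

Section TC.
Variable V : finType.

Definition edges_of (W : {set V}) : {set {set V}} :=
  [set e : {set V} | (e \subset W) && (#|e| == 2)].

(* lam : {set V} -> nat is the labelling; only its values on edges matter.
   (G[W], lam) is a simple temporal clique: edges sharing an endpoint get
   distinct labels. *)
Definition simple_temporal_clique (W : {set V}) (lam : {set V} -> nat) : Prop :=
  forall x y z, x \in W -> y \in W -> z \in W ->
    x != y -> x != z -> y != z -> lam [set x; y] != lam [set x; z].

Definition is_e_minus (W : {set V}) (lam : {set V} -> nat) (v : V) (e : {set V}) :=
  [/\ e \in edges_of W, v \in e &
      forall e', e' \in edges_of W -> v \in e' -> lam e <= lam e'].

Definition is_e_plus (W : {set V}) (lam : {set V} -> nat) (v : V) (e : {set V}) :=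
  [/\ e \in edges_of W, v \in e &
      forall e', e' \in edges_of W -> v \in e' -> lam e' <= lam e].

Definition path_edges (x : V) (p : seq V) : seq {set V} :=
  pairmap (fun a b => [set a; b]) x p.

Definition journey_in (lam : {set V} -> nat) (E' : {set {set V}}) (x y : V)
    (p : seq V) : bool :=
  [&& p != [::], last x p == y, path (fun a b => a != b) x p,
      sorted ltn (map lam (path_edges x p)) &
      all (fun e => e \in E') (path_edges x p)].

Definition temporal_spanner (W : {set V}) (lam : {set V} -> nat)
    (E' : {set {set V}}) : Prop :=
  E' \subset edges_of W /\
  forall x y, x \in W -> y \in W -> x != y ->
    exists p : seq V, journey_in lam E' x y p.
End TC.

(** A journey inside the clique on [V :\ u] is still a journey of the whole
    clique, so only journeys starting or ending at [u] need new edges.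
    From [u], take the edge [{u,v}] and continue along a journey of [S'] from
    [v]: since [{u,v}] has the smallest label at [v] and labels at [v] are
    distinct, the label strictly increases at [v].  Symmetrically, a journey of
    [S'] into [w] can be extended by [{w,u}], whose label is the largest at [w]. *)

From mathcomp Require Import all_boot.

Set Implicit Arguments.
Unset Strict Implicit.
Unset Printing Implicit Defensive.

Lemma path_edges_rcons (V : finType) (x : V) (p : seq V) (y : V) :
  path_edges x (rcons p y) = rcons (path_edges x p) [set last x p; y].
Proof. by elim: p x => [|a p IHp] x //=; rewrite /path_edges /= -IHp. Qed.

Lemma sorted_rcons2 (T : Type) (r : rel T) (s : seq T) (a b : T) :
  sorted r (rcons (rcons s a) b) = sorted r (rcons s a) && r a b.
Proof. by case: s => [|c s] /=; rewrite ?andbT // rcons_path last_rcons. Qed.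

Lemma edges_of_sub (V : finType) (W : {set V}) (e : {set V}) :
  e \in edges_of W -> e \subset W.
Proof. by rewrite inE => /andP[]. Qed.

Lemma edges_of2 (V : finType) (W : {set V}) (x y : V) :
  x \in W -> y \in W -> x != y -> [set x; y] \in edges_of W.
Proof.
by move=> xW yW xy; rewrite inE cards2 xy andbT subUset !sub1set xW yW.
Qed.

Lemma edges_ofS (V : finType) (W1 W2 : {set V}) :
  W1 \subset W2 -> edges_of W1 \subset edges_of W2.
Proof.
move=> sW12; apply/subsetP => e; rewrite !inE => /andP[seW1 ->].
by rewrite (subset_trans seW1 sW12).
Qed.

Section Journeys.

Variables (V : finType) (lam : {set V} -> nat) (E : {set {set V}}).

Lemma journey_inS (E' : {set {set V}}) (x y : V) (p : seq V) :
  E \subset E' -> journey_in lam E x y p -> journey_in lam E' x y p.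
Proof.
move=> sEE' /and5P[p0 py pxy sp /allP pE]; apply/and5P; split=> //.
by apply/allP => e /pE; apply: (subsetP sEE').
Qed.

Lemma journey_in_edge (x y : V) :
  x != y -> [set x; y] \in E -> journey_in lam E x y [:: y].
Proof. by move=> xy xyE; rewrite /journey_in /= eqxx xy xyE. Qed.

Lemma journey_in_cons (x y z a : V) (p : seq V) :
  x != y -> [set x; y] \in E -> lam [set x; y] < lam [set y; a] ->
  journey_in lam E y z (a :: p) -> journey_in lam E x z (y :: a :: p).
Proof.
move=> xy xyE lt_xy_ya /and5P[_ pz pya sp pE].
rewrite /journey_in /= xy xyE lt_xy_ya.
by move: pz pya sp pE => /= -> -> -> ->.
Qed.

Lemma journey_in_rcons (x y z : V) (q : seq V) :
  y != z -> [set y; z] \in E -> lam [set last x q; y] < lam [set y; z] ->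
  journey_in lam E x y (rcons q y) -> journey_in lam E x z (rcons (rcons q y) z).
Proof.
move=> yz yzE lt_qy_yz /and5P[_ _ pxq sq qE].
rewrite /journey_in last_rcons eqxx rcons_path last_rcons pxq yz.
rewrite [path_edges _ _]path_edges_rcons last_rcons map_rcons all_rcons yzE qE.
move: sq; rewrite (path_edges_rcons x q y) map_rcons sorted_rcons2 => -> /=.
by rewrite lt_qy_yz andbT; case: (rcons q y).
Qed.

End Journeys.

Section TemporalClique.

Variables (V : finType) (lam : {set V} -> nat).
Hypothesis lam_simple : simple_temporal_clique [set: V] lam.

Lemma e_minus_lt (u v a : V) :
  is_e_minus [set: V] lam v [set u; v] -> u != v -> a != u -> a != v ->
  lam [set u; v] < lam [set v; a].
Proof.
case=> _ _ uv_min uv au av.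
rewrite ltn_neqAle uv_min ?andbT ?edges_of2 ?inE ?eqxx 1?eq_sym //.
rewrite [[set u; v]]setUC.
by apply: lam_simple; rewrite ?inE // eq_sym.
Qed.

Lemma e_plus_gt (u w a : V) :
  is_e_plus [set: V] lam w [set u; w] -> u != w -> a != u -> a != w ->
  lam [set a; w] < lam [set w; u].
Proof.
case=> _ _ uw_max uw au aw.
rewrite [[set w; u]]setUC ltn_neqAle uw_max ?andbT ?edges_of2 ?inE ?eqxx ?orbT //.
rewrite [[set a; w]]setUC [[set u; w]]setUC.
by apply: lam_simple; rewrite ?inE // eq_sym.
Qed.

End TemporalClique.

Section AddVertex.

Variables (V : finType) (lam : {set V} -> nat) (u v w : V) (S' : {set {set V}}).
Hypothesis lam_simple : simple_temporal_clique [set: V] lam.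
Hypotheses (uv : u != v) (uw : u != w).
Hypothesis uv_min : is_e_minus [set: V] lam v [set u; v].
Hypothesis uw_max : is_e_plus [set: V] lam w [set u; w].
Hypothesis S'_spanner : temporal_spanner ([set: V] :\ u) lam S'.

Local Notation S := (S' :|: [set [set u; v]; [set u; w]]).

Lemma S'_edge_avoids (a b : V) : [set a; b] \in S' -> a != u /\ b != u.
Proof.
move=> /(subsetP S'_spanner.1) /edges_of_sub /subsetP sabW.
have /sabW := set21 a b; have /sabW := set22 a b.
by rewrite !in_setD1 => /andP[-> _] /andP[-> _].
Qed.

Lemma S'_journey (x y : V) :
  x != u -> y != u -> x != y -> exists p, journey_in lam S' x y p.
Proof. by move=> xu yu; apply: S'_spanner.2; rewrite !inE andbT. Qed.

Lemma spanner_edges : S \subset edges_of [set: V].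
Proof.
rewrite subUset (subset_trans S'_spanner.1) ?edges_ofS ?subsetDl //=.
by apply/subsetP => e /set2P[] ->; apply: edges_of2; rewrite ?inE.
Qed.

Lemma journey_from_u (y : V) : y != u -> exists p, journey_in lam S u y p.
Proof.
move=> yu; have [-> | yv] := eqVneq y v.
  by exists [:: v]; apply: journey_in_edge; rewrite ?uv // !inE eqxx orbT.
have [p Jp] : exists p, journey_in lam S' v y p.
  by apply: S'_journey; rewrite // eq_sym.
case: p Jp => [|a p] Jp; first by case/and5P: Jp.
have /and5P[_ _ /andP[va _] _ /andP[vaS' _]] := Jp.
have [_ au] := S'_edge_avoids vaS'.
exists (v :: a :: p); apply: journey_in_cons => //.
- by rewrite !inE eqxx orbT.
- by apply: e_minus_lt; rewrite // eq_sym.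
- exact: journey_inS (subsetUl _ _) Jp.
Qed.

Lemma journey_to_u (x : V) : x != u -> exists p, journey_in lam S x u p.
Proof.
move=> xu; have [-> | xw] := eqVneq x w.
  by exists [:: u]; apply: journey_in_edge; rewrite 1?eq_sym // setUC !inE eqxx !orbT.
have [p Jp] : exists p, journey_in lam S' x w p.
  by apply: S'_journey; rewrite // eq_sym.
case/lastP: p Jp => [|q z] Jp; first by case/and5P: Jp.
have /and5P[_ /eqP zw pxq _ qE] := Jp; rewrite last_rcons in zw; subst z.
move: pxq; rewrite rcons_path => /andP[_ qw].
move: qE; rewrite path_edges_rcons all_rcons => /andP[qwS' _].
have [qu _] := S'_edge_avoids qwS'.
exists (rcons (rcons q w) u); apply: journey_in_rcons.
- by rewrite eq_sym.
- by rewrite setUC !inE eqxx !orbT.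
- exact: e_plus_gt.
- exact: journey_inS (subsetUl _ _) Jp.
Qed.

End AddVertex.

Theorem theorem1 (V : finType) (lam : {set V} -> nat) (u v w : V)
    (S' : {set {set V}}) :
  simple_temporal_clique [set: V] lam ->
  u != v -> u != w -> v != w ->
  is_e_minus [set: V] lam v [set u; v] ->
  is_e_plus [set: V] lam w [set u; w] ->
  temporal_spanner ([set: V] :\ u) lam S' ->
  temporal_spanner [set: V] lam (S' :|: [set [set u; v]; [set u; w]]).
Proof.
move=> lam_simple uv uw _ uv_min uw_max S'_spanner.
split; first exact: spanner_edges uv uw S'_spanner.
move=> x y _ _; have [-> uy | xu xy] := eqVneq x u.
  by apply: (journey_from_u w lam_simple uv uv_min S'_spanner); rewrite eq_sym.
have [-> | yu] := eqVneq y u.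
  exact: (journey_to_u v lam_simple uw uw_max S'_spanner).
have [p Jp] := S'_journey S'_spanner xu yu xy.
by exists p; apply: journey_inS (subsetUl _ _) Jp.
Qed.
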